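(* Let $k=\mathbb{F}_3$, let $O_7(k)$ be the group of $7\times7$ matrices over $k$ orthogonal for the bilinear form $\langle x,y\rangle=x_1y_7+x_2y_6+\dots+x_7y_1$ on $k^7$, and let \[ A=\begin{pmatrix} 0&0&1&0&0&1&0\\ 1&0&0&0&0&0&1\\ 0&1&0&0&0&0&0\\ 0&0&0&0&0&0&0\\ 0&1&0&0&0&0&1\\ 0&0&1&0&1&0&0\\ 0&0&0&0&0&1&0 \end{pmatrix}. \] Then there exists $g\in O_7(k)$ such that $M=g^{-1}Ag$ satisfies $M_{ij}=0$ for all $(i,j)\in\{(4,1),(5,1),(5,2),(6,1),(6,2),(6,3),(7,1),(7,2),(7,3),(7,4)\}$. Even more, there exists $g\in O_7(k)$ such that $M=g^{-1}Ag$ satisfies these vanishing conditions and in addition $M_{31},M_{42},M_{53},M_{64},M_{75}\in k^\times$ (all remaining entries arbitrary).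
   Context: $M_{ij}$ denotes the entry in row $i$ and column $j$. *)

From HB Require Import structures.
From mathcomp Require Import all_boot all_order all_algebra.
Set Implicit Arguments. Unset Strict Implicit. Unset Printing Implicit Defensive.
Import GRing.Theory.
Local Open Scope ring_scope.

Notation k := 'F_3.

(* Gram matrix of <x,y> = x_1 y_7 + x_2 y_6 + ... + x_7 y_1 (0-based: i + j = 6). *)
Definition Jform : 'M[k]_7 := \matrix_(i < 7, j < 7) (if (i + j == 6)%N then 1 else 0).

Definition orthogonal7 (g : 'M[k]_7) : Prop := g^T *m Jform *m g = Jform.

Definition A_rows : seq (seq nat) :=
  [:: [:: 0; 0; 1; 0; 0; 1; 0];
      [:: 1; 0; 0; 0; 0; 0; 1];
      [:: 0; 1; 0; 0; 0; 0; 0];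
      [:: 0; 0; 0; 0; 0; 0; 0];
      [:: 0; 1; 0; 0; 0; 0; 1];
      [:: 0; 0; 1; 0; 1; 0; 0];
      [:: 0; 0; 0; 0; 0; 1; 0]]%N.

Definition Amat : 'M[k]_7 :=
  \matrix_(i < 7, j < 7) ((nth 0 (nth [::] A_rows i) j)%:R).

(* Entry M_{ij} with 1-based indices i, j in {1..7}. *)
Definition entry (M : 'M[k]_7) (i j : nat) : k := M (inord i.-1) (inord j.-1).

Definition zero_positions : seq (nat * nat) :=
  [:: (4,1); (5,1); (5,2); (6,1); (6,2); (6,3); (7,1); (7,2); (7,3); (7,4)]%N.

Definition unit_positions : seq (nat * nat) :=
  [:: (3,1); (4,2); (5,3); (6,4); (7,5)]%N.

From mathcomp Require Import all_boot all_order all_algebra.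
Import GRing.Theory.
Local Open Scope ring_scope.

(* An explicit orthogonal g does it.  As J is symmetric with J^2 = 1, the
   relation g^T J g = J gives g^-1 = J g^T J, so no inversion is needed, and
   M = g^-1 A g turns out to vanish below its second subdiagonal, which
   consists of ones. *)

Section OrthogonalInverse.

Context {R : comUnitRingType} {n : nat} {J g : 'M[R]_n}.
Hypotheses (JJ : J *m J = 1%:M) (gJg : g^T *m J *m g = J).

Lemma invmx_orthogonal : invmx g = J *m g^T *m J.
Proof.
have left_inv : J *m g^T *m J *m g = 1%:M by rewrite -!mulmxA (mulmxA g^T) gJg.
have [_ g_unit] := mulmx1_unit left_inv.
by rewrite -[RHS]mulmx1 -(mulmxV g_unit) mulmxA left_inv mul1mx.
Qed.

End OrthogonalInverse.

(* [ord_enum] and [inord] go through [insub], which cases on the opaque [idP]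
   and is therefore stuck under [vm_compute]; [insub_eq] decides the bound by
   evaluation instead.  Matrices and big sums are locked as well, so the
   lemmas below turn matrix expressions into functions that evaluate. *)
Definition ord_enum_eval n : seq 'I_n := pmap (insub_eq _) (iota 0 n).

Lemma ord_enum_evalE n : ord_enum_eval n = ord_enum n.
Proof. by apply: eq_pmap; exact: insub_eqE. Qed.

Lemma mem_ord_enum_eval {n} (i : 'I_n) : i \in ord_enum_eval n.
Proof. by rewrite ord_enum_evalE mem_ord_enum. Qed.

Definition inord_eval n m : 'I_n.+1 := odflt ord0 (insub_eq _ m).

Lemma inord_evalE n m : inord_eval n m = inord m.
Proof. by rewrite /inord_eval insub_eqE. Qed.

Section ComputableMatrices.

Variable R : pzSemiRingType.

Lemma sum_ord_foldr n (F : 'I_n -> R) :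
  \sum_(i < n) F i = foldr (fun i s => F i + s) 0 (ord_enum_eval n).
Proof.
rewrite (perm_big (ord_enum_eval n)) /=; first by rewrite unlock.
apply: uniq_perm => [||i]; first exact: index_enum_uniq.
  by rewrite ord_enum_evalE ord_enum_uniq.
by rewrite mem_index_enum mem_ord_enum_eval.
Qed.

Lemma mulmx_fun m n p (F : 'I_m -> 'I_n -> R) (G : 'I_n -> 'I_p -> R) :
  \matrix_(i, j) F i j *m \matrix_(i, j) G i j
  = \matrix_(i, j) foldr (fun l s => F i l * G l j + s) 0 (ord_enum_eval n).
Proof.
apply/matrixP => i j; rewrite !mxE -sum_ord_foldr.
by apply: eq_bigr => l _; rewrite !mxE.
Qed.

Lemma trmx_fun m n (F : 'I_m -> 'I_n -> R) :
  (\matrix_(i, j) F i j)^T = \matrix_(i, j) F j i.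
Proof. by apply/matrixP => i j; rewrite !mxE. Qed.

Lemma scalar_mx_fun n (a : R) : a%:M = \matrix_(i < n, j < n) (a *+ (i == j)).
Proof. by apply/matrixP => i j; rewrite !mxE. Qed.

Lemma eq_mx_fun (T : eqType) m n (F G : 'I_m -> 'I_n -> T) :
  all (fun i => all (fun j => F i j == G i j) (ord_enum_eval n)) (ord_enum_eval m) ->
  \matrix_(i, j) F i j = \matrix_(i, j) G i j.
Proof.
move=> /allP FG; apply/matrixP => i j; rewrite !mxE.
by have /allP/(_ j (mem_ord_enum_eval j))/eqP := FG i (mem_ord_enum_eval i).
Qed.

End ComputableMatrices.

Definition mx_of_rows {R : pzSemiRingType} {m n : nat} (rs : seq (seq nat)) :
    'M[R]_(m, n) :=
  \matrix_(i, j) (nth 0 (nth [::] rs i) j)%:R.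

Definition gmat : 'M[k]_7 := mx_of_rows
  [:: [:: 0; 0; 1; 0; 0; 0; 0];
      [:: 0; 1; 0; 0; 0; 0; 0];
      [:: 1; 0; 0; 0; 0; 0; 0];
      [:: 1; 1; 0; 1; 0; 0; 0];
      [:: 1; 2; 0; 2; 0; 0; 1];
      [:: 0; 1; 2; 2; 0; 1; 0];
      [:: 0; 1; 0; 0; 1; 0; 0]]%N.

Definition gmat_inv : 'M[k]_7 := mx_of_rows
  [:: [:: 0; 0; 1; 0; 0; 0; 0];
      [:: 0; 1; 0; 0; 0; 0; 0];
      [:: 1; 0; 0; 0; 0; 0; 0];
      [:: 0; 2; 2; 1; 0; 0; 0];
      [:: 0; 2; 0; 0; 0; 0; 1];
      [:: 1; 1; 2; 1; 0; 1; 0];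
      [:: 0; 0; 1; 1; 1; 0; 0]]%N.

Definition Mmat : 'M[k]_7 := mx_of_rows
  [:: [:: 0; 1; 0; 0; 0; 0; 0];
      [:: 0; 1; 1; 0; 1; 0; 0];
      [:: 1; 1; 2; 2; 0; 1; 0];
      [:: 0; 1; 2; 0; 2; 0; 0];
      [:: 0; 0; 1; 2; 2; 1; 0];
      [:: 0; 0; 0; 1; 1; 1; 1];
      [:: 0; 0; 0; 0; 1; 0; 0]]%N.

Lemma Jform_involutive : Jform *m Jform = 1%:M.
Proof. by rewrite scalar_mx_fun !mulmx_fun; apply: eq_mx_fun; vm_compute. Qed.

Lemma gmat_orthogonal : orthogonal7 gmat.
Proof. by rewrite /orthogonal7 !trmx_fun !mulmx_fun; apply: eq_mx_fun; vm_compute. Qed.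

Lemma invmx_gmat : invmx gmat = gmat_inv.
Proof.
rewrite (invmx_orthogonal Jform_involutive gmat_orthogonal).
by rewrite !trmx_fun !mulmx_fun; apply: eq_mx_fun; vm_compute.
Qed.

Lemma conj_Amat : invmx gmat *m Amat *m gmat = Mmat.
Proof. by rewrite invmx_gmat !mulmx_fun; apply: eq_mx_fun; vm_compute. Qed.

Lemma entry_mx_fun (F : 'I_7 -> 'I_7 -> k) a b :
  entry (\matrix_(i, j) F i j) a b = F (inord_eval _ a.-1) (inord_eval _ b.-1).
Proof. by rewrite /entry mxE !inord_evalE. Qed.

Lemma Mmat_zero_positions p : p \in zero_positions -> entry Mmat p.1 p.2 = 0.
Proof.
move=> p_zero; apply/eqP; rewrite entry_mx_fun.
by move: p p_zero; apply/allP; vm_compute.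
Qed.

Lemma Mmat_unit_positions p : p \in unit_positions -> entry Mmat p.1 p.2 != 0.
Proof. by rewrite entry_mx_fun; move: p; apply/allP; vm_compute. Qed.

Theorem lemma2p4 :
  (exists g : 'M[k]_7, orthogonal7 g /\
     let M := invmx g *m Amat *m g in
     forall p, p \in zero_positions -> entry M p.1 p.2 = 0)
  /\
  (exists g : 'M[k]_7, orthogonal7 g /\
     let M := invmx g *m Amat *m g in
     (forall p, p \in zero_positions -> entry M p.1 p.2 = 0) /\
     (forall p, p \in unit_positions -> entry M p.1 p.2 != 0)).
Proof.
split; exists gmat; (split; first exact: gmat_orthogonal); rewrite conj_Amat.
  exact: Mmat_zero_positions.
split; [exact: Mmat_zero_positions | exact: Mmat_unit_positions].
Qed.
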